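(* Let $K$ be a superfield and $f(X),g(X)\in K[X]$ with $g(X)\ne0$. Then there exist $q(X),r(X)\in K[X]$ such that $f(X)\in q(X)g(X)+r(X)$ and either $r(X)=0$ or $\deg r(X)<\deg g(X)$.
   Context: Multivalued operations are extended to subsets by unions. A superring is a structure $(S,+,\cdot,-,0,1)$ with multivalued addition and multiplication such that $(S,+,-,0)$ is a commutative multigroup, $(S,\cdot,1)$ is a commutative multimonoid, $a\cdot0=\{0\}$, $c(a+b)\subseteq ca+cb$, and $-(ab)=(-a)b=a(-b)$ (multigroup axioms: $c\in ab\Rightarrow a\in c\,r(b)$ and $b\in r(a)c$; $b\in a\cdot1\iff a=b$; $(ab)c\subseteq a(bc)$; $ab=ba$; multimonoid: the last two and $a\in 1\cdot a$). A superdomain is a nontrivial superring in which $0\in ab$ iff $a=0$ or $b=0$. A superfield is a superdomain in which for every $a\ne0$ there exists $b$ with $1\in ab$. The superring of polynomials $R[X]$ is the set of finitely supported sequences $(a_n)_{n\in\omega}$ with $(c_n)\in(a_n)+(b_n)$ iff $c_n\in a_n+b_n$ for all $n$, and $(c_n)\in(a_n)\cdot(b_n)$ iff $c_n\in a_0b_n+a_1b_{n-1}+\dots+a_nb_0$ for all $n$; $-(a_n)=(-a_n)$, $0=(0,0,\dots)$, $1=(1,0,\dots)$. The degree of a nonzero polynomial is the largest $n$ with $a_n\ne0$. *)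

From Stdlib Require Import Arith.

Set Implicit Arguments.

(** Multivalued operations are encoded as ternary relations:
    [add a b c] means  c ∈ a + b,  [mul a b c] means  c ∈ a · b. *)
Record superring := Superring {
  carrier :> Type;
  add : carrier -> carrier -> carrier -> Prop;
  mul : carrier -> carrier -> carrier -> Prop;
  neg : carrier -> carrier;
  zero : carrier;
  one : carrier;
  add_rev : forall a b c, add a b c -> add c (neg b) a /\ add (neg a) c b;
  add_zero : forall a b, add a zero b <-> a = b;
  add_assoc : forall a b c x y, add a b x -> add x c y ->
      exists z, add b c z /\ add a z y;
  add_comm : forall a b c, add a b c <-> add b a c;
  mul_assoc : forall a b c x y, mul a b x -> mul x c y ->
      exists z, mul b c z /\ mul a z y;
  mul_comm : forall a b c, mul a b c <-> mul b a c;
  one_mul : forall a, mul one a a;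
  mul_zero : forall a c, mul a zero c <-> c = zero;
  mul_distr : forall a b c x y, add a b x -> mul c x y ->
      exists u v, mul c a u /\ mul c b v /\ add u v y;
  neg_mull : forall a b y, (exists x, mul a b x /\ y = neg x) <-> mul (neg a) b y;
  neg_mulr : forall a b y, (exists x, mul a b x /\ y = neg x) <-> mul a (neg b) y
}.

Arguments add {s}. Arguments mul {s}. Arguments neg {s}.
Arguments zero {s}. Arguments one {s}.

Definition superdomain (R : superring) : Prop :=
  (zero : R) <> one /\
  forall a b : R, mul a b zero <-> a = zero \/ b = zero.

Definition superfield (R : superring) : Prop :=
  superdomain R /\ forall a : R, a <> zero -> exists b, mul a b one.

Definition is_poly (R : superring) (p : nat -> R) : Prop :=
  exists N, forall n, N <= n -> p n = zero.

Definition set_add (R : superring) (A B : R -> Prop) : R -> Prop :=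
  fun z => exists x y, A x /\ B y /\ add x y z.

(** The set  a_0 b_n + a_1 b_(n-1) + ... + a_k b_(n-k)  (left associated). *)
Fixpoint conv_partial (R : superring) (a b : nat -> R) (n k : nat) : R -> Prop :=
  match k with
  | O => mul (a 0) (b n)
  | S k' => @set_add R (conv_partial R a b n k') (mul (a k) (b (n - k)))
  end.

Arguments conv_partial {R}.

Definition padd (R : superring) (a b c : nat -> R) : Prop :=
  forall n, add (a n) (b n) (c n).

Definition pmul (R : superring) (a b c : nat -> R) : Prop :=
  forall n, conv_partial a b n n (c n).

Definition pzero (R : superring) : nat -> R := fun _ => zero.

Definition is_degree (R : superring) (p : nat -> R) (n : nat) : Prop :=
  p n <> zero /\ forall m, n < m -> p m = zero.

Arguments is_poly {R}. Arguments set_add {R}. Arguments padd {R}.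
Arguments pmul {R}. Arguments pzero {R}. Arguments is_degree {R}.

(** Long division works as for ordinary polynomials, provided the leading
    coefficient [g dg] of the divisor has an inverse [c]: if [f] has top
    coefficient [f m] with [m >= dg], the monomial [t X^(m - dg)] with
    [t ∈ c f m] times [g] admits a product whose coefficient at [m] is [f m]
    (as [f m ∈ t g dg]) and which vanishes above [m].  Choosing a difference
    [f'] with [f ∈ that product + f'] that vanishes from [m] on, one recurses
    on [f'] and adds the monomial to the quotient found for [f']; this is
    legitimate because multiplication by [g] is additive on polynomials with
    disjoint supports. *)

From Stdlib Require Import Arith Lia Classical ClassicalEpsilon.

Set Implicit Arguments.
Unset Strict Implicit.

Arguments add_rev {s} a b c _.
Arguments add_zero {s} a b.
Arguments add_assoc {s} a b c x y _ _.
Arguments add_comm {s} a b c.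
Arguments mul_assoc {s} a b c x y _ _.
Arguments mul_comm {s} a b c.
Arguments one_mul {s} a.
Arguments mul_zero {s} a c.
Arguments mul_distr {s} a b c x y _ _.

Section Superring.

Variable R : superring.

Lemma add_0l (a b : R) : add zero a b <-> a = b.
Proof. rewrite add_comm. apply add_zero. Qed.

Lemma mul_0l (a c : R) : mul zero a c <-> c = zero.
Proof. rewrite mul_comm. apply mul_zero. Qed.

Lemma add_Nl (a : R) : add (neg a) a zero.
Proof. exact (proj2 (add_rev _ _ _ (proj2 (add_zero a a) eq_refl))). Qed.

Lemma negK (a : R) : neg (neg a) = a.
Proof. exact (proj1 (add_zero _ _) (proj2 (add_rev _ _ _ (add_Nl a)))). Qed.

Lemma add_ex (a b : R) : exists z, add a b z.
Proof.
  destruct (add_assoc _ _ _ _ _ (add_Nl a) (proj2 (add_0l b b) eq_refl))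
    as [z [Hz _]].
  eauto.
Qed.

Lemma mul_ex (a b : R) : exists z, mul a b z.
Proof.
  pose proof (proj1 (add_comm _ _ _) (add_Nl b)) as Hb0.
  destruct (mul_distr _ _ a _ _ Hb0 (proj2 (mul_zero a zero) eq_refl))
    as [z [_ [Hz _]]].
  eauto.
Qed.

Lemma add_sub_ex (a c : R) : exists b, add a b c.
Proof.
  destruct (add_ex c (neg a)) as [b Hb].
  exists b. apply add_comm.
  destruct (add_rev _ _ _ Hb) as [Hc _]. rewrite negK in Hc. exact Hc.
Qed.

Lemma add_assoc_r (a b c y z : R) :
  add b c y -> add a y z -> exists w, add a b w /\ add w c z.
Proof.
  intros Hy Hz. apply add_comm in Hy. apply add_comm in Hz.
  destruct (add_assoc _ _ _ _ _ Hy Hz) as [w [Hw1 Hw2]].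
  exists w. split; apply add_comm; assumption.
Qed.

Lemma set_add_zero_l (A B : R -> Prop) z :
  (forall x, A x <-> x = zero) -> (set_add A B z <-> B z).
Proof.
  intros HA. split.
  - intros [x [y [Hx [Hy Hxy]]]]. apply HA in Hx. subst x.
    apply add_0l in Hxy. subst; auto.
  - intros Hz. exists zero, z. repeat split; auto.
    + apply HA; reflexivity.
    + apply add_0l; reflexivity.
Qed.

Lemma set_add_zero_r (A B : R -> Prop) z :
  (forall y, B y <-> y = zero) -> (set_add A B z <-> A z).
Proof.
  intros HB. split.
  - intros [x [y [Hx [Hy Hxy]]]]. apply HB in Hy. subst y.
    apply add_zero in Hxy. subst; auto.
  - intros Hz. exists z, zero. repeat split; auto.
    + apply HB; reflexivity.
    + apply add_zero; reflexivity.
Qed.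

End Superring.

Section Polynomials.

Variable R : superring.
Implicit Types a b c f g p r : nat -> R.

Definition monomial (k : nat) (t : R) : nat -> R :=
  fun j => if Nat.eqb j k then t else zero.

Lemma conv_partial_zero_l a g n K z :
  (forall j, j <= K -> a j = zero) -> (conv_partial a g n K z <-> z = zero).
Proof.
  revert z; induction K as [|K IH]; intros z Ha; cbn [conv_partial].
  - rewrite (Ha 0 (le_n 0)). apply mul_0l.
  - rewrite set_add_zero_l, (Ha (S K) (le_n _)); [apply mul_0l|].
    intros x. apply IH. intros j Hj. apply Ha. lia.
Qed.

Lemma conv_partial_monomial g k t n K z :
  k <= K -> k <= n ->
  (conv_partial (monomial k t) g n K z <-> mul t (g (n - k)) z).
Proof.
  revert z. induction K as [|K IH]; intros z HkK Hkn; cbn [conv_partial].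
  - assert (k = 0) by lia. subst k. rewrite Nat.sub_0_r. reflexivity.
  - unfold monomial at 2. destruct (Nat.eqb_spec (S K) k) as [<-|Hk].
    + rewrite set_add_zero_l; [reflexivity|].
      intros x. apply conv_partial_zero_l. intros j Hj.
      unfold monomial. destruct (Nat.eqb_spec j (S K)); [lia|reflexivity].
    + rewrite set_add_zero_r; [apply IH; lia|]. intros y. apply mul_0l.
Qed.

Lemma conv_partial_add_disjoint a b c g n :
  (forall j, a j = zero \/ b j = zero) -> (forall j, add (a j) (b j) (c j)) ->
  forall K x y z, conv_partial a g n K x -> conv_partial b g n K y ->
  add x y z -> conv_partial c g n K z.
Proof.
  intros Hab Habc.
  assert (Hca : forall j, b j = zero -> c j = a j).
  { intros j Hb. symmetry. apply add_zero. rewrite <- Hb. apply Habc. }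
  assert (Hcb : forall j, a j = zero -> c j = b j).
  { intros j Ha. symmetry. apply add_0l. rewrite <- Ha. apply Habc. }
  intros K. induction K as [|K IH]; intros x y z Hx Hy Hz; cbn [conv_partial] in *.
  - destruct (Hab 0) as [E|E]; rewrite E in *.
    + apply mul_0l in Hx. subst x. apply add_0l in Hz. subst z.
      rewrite Hcb by exact E. exact Hy.
    + apply mul_0l in Hy. subst y. apply add_zero in Hz. subst z.
      rewrite Hca by exact E. exact Hx.
  - destruct (Hab (S K)) as [E|E].
    + destruct Hx as [x0 [e [Hx0 [He Hxe]]]]. rewrite E in He.
      apply mul_0l in He. subst e. apply add_zero in Hxe. subst x0.
      destruct Hy as [y0 [e [Hy0 [He Hye]]]].
      destruct (add_assoc_r Hye Hz) as [w [Hw1 Hw2]].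
      exists w, e. rewrite Hcb by exact E. eauto.
    + destruct Hy as [y0 [e [Hy0 [He Hye]]]]. rewrite E in He.
      apply mul_0l in He. subst e. apply add_zero in Hye. subst y0.
      destruct Hx as [x0 [e [Hx0 [He Hxe]]]]. apply add_comm in Hxe.
      destruct (add_assoc _ _ _ _ _ Hxe Hz) as [w [Hw1 Hw2]].
      exists w, e. rewrite Hca by exact E.
      repeat split; [exact (IH x0 _ w Hx0 Hy0 Hw1) | exact He |].
      apply add_comm; exact Hw2.
Qed.

Lemma pmul_0l g : pmul pzero g pzero.
Proof. intros n. apply conv_partial_zero_l; reflexivity. Qed.

Lemma pmul_add_disjoint a b c g x y z :
  (forall j, a j = zero \/ b j = zero) -> padd a b c ->
  pmul a g x -> pmul b g y -> padd x y z -> pmul c g z.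
Proof.
  intros Hab Habc Hx Hy Hz n. exact (conv_partial_add_disjoint Hab Habc (Hx n) (Hy n) (Hz n)).
Qed.

Lemma padd_sub_ex p f : exists f', padd p f' f /\ forall n, p n = f n -> f' n = zero.
Proof.
  assert (Hsub : forall n, exists y, add (p n) y (f n) /\ (p n = f n -> y = zero)).
  { intros n. destruct (classic (p n = f n)) as [E|E].
    - exists zero. split; [rewrite E; apply add_zero; reflexivity | auto].
    - destruct (add_sub_ex (p n) (f n)) as [y Hy]. exists y. split; [exact Hy | tauto]. }
  destruct (choice _ Hsub) as [f' Hf']. exists f'. split; intros n; apply Hf'.
Qed.

Lemma padd_assoc_ex p p' r' f f' :
  padd p' r' f' -> padd p f' f -> exists s, padd p' p s /\ padd s r' f.
Proof.
  intros H' H.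
  assert (Hs : forall n, exists s, add (p' n) (p n) s /\ add s (r' n) (f n)).
  { intros n. destruct (add_assoc_r (H' n) (H n)) as [w [Hw1 Hw2]].
    exists w. split; [apply add_comm|]; assumption. }
  destruct (choice _ Hs) as [s Hs']. exists s. split; intros n; apply Hs'.
Qed.

Lemma is_degree_ex r N :
  (forall n, N <= n -> r n = zero) ->
  (forall n, r n = zero) \/ exists d, d < N /\ is_degree r d.
Proof.
  induction N as [|N IH]; intros Hr.
  - left. intros n. apply Hr. lia.
  - destruct (classic (r N = zero)) as [E|E].
    + destruct IH as [Hz|[d [Hd Hdeg]]].
      * intros n Hn. destruct (Nat.eq_dec n N) as [->|]; [exact E | apply Hr; lia].
      * left; exact Hz.
      * right. exists d. split; [lia | exact Hdeg].
    + right. exists N. split; [lia|]. split; [exact E|]. intros m Hm. apply Hr. lia.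
Qed.

End Polynomials.

Section Division.

Variables (R : superring) (g : nat -> R) (dg : nat) (c : R).
Hypothesis g_deg : is_degree g dg.
Hypothesis g_lead_inv : mul (g dg) c one.

Lemma pmul_monomial_lead (f : nat -> R) m :
  dg <= m -> exists t p, pmul (monomial (m - dg) t) g p /\
    p m = f m /\ forall n, m < n -> p n = zero.
Proof.
  intros Hm. destruct g_deg as [_ Hg].
  set (k := m - dg).
  destruct (mul_assoc _ _ _ _ _ g_lead_inv (one_mul (f m))) as [t [_ Ht]].
  apply mul_comm in Ht.
  assert (Hp : forall n, exists y, conv_partial (monomial k t) g n n y /\
            (n = m -> y = f m) /\ (m < n -> y = zero)).
  { intros n. destruct (lt_dec n k).
    - exists zero. split; [|split; intros; lia].
      apply conv_partial_zero_l; [|reflexivity]. intros j Hj. unfold monomial.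
      destruct (Nat.eqb_spec j k); [lia | reflexivity].
    - enough (Hy : exists y, mul t (g (n - k)) y /\
                (n = m -> y = f m) /\ (m < n -> y = zero)).
      { destruct Hy as [y [Hy Hy']]. exists y.
        split; [apply conv_partial_monomial; [lia | lia | exact Hy] | exact Hy']. }
      destruct (lt_eq_lt_dec n m) as [[Hlt | ->] | Hgt].
      + destruct (mul_ex t (g (n - k))) as [u Hu]. exists u. split; [exact Hu | split; intros; lia].
      + exists (f m). split; [|split; intros; [reflexivity | lia]].
        replace (m - k) with dg by lia. exact Ht.
      + exists zero. split; [|split; intros; [lia | reflexivity]].
        rewrite (Hg (n - k)) by lia. apply mul_zero; reflexivity. }
  destruct (choice _ Hp) as [p Hp'].
  exists t, p. split; [|split]; [intros n; apply Hp' | apply Hp'; reflexivity | intros n; apply Hp'].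
Qed.

Lemma pdiv_bounded m (f : nat -> R) : (forall n, m <= n -> f n = zero) ->
  exists q r p : nat -> R, (forall n, m <= n + dg -> q n = zero) /\
    (forall n, dg <= n -> r n = zero) /\ pmul q g p /\ padd p r f.
Proof.
  revert f. induction m as [|m IH]; intros f Hf;
    [|destruct (le_lt_dec (S m) dg) as [Hle|Hlt]].
  1-2: exists pzero, f, pzero; split; [intros; reflexivity|];
    split; [intros n Hn; apply Hf; lia|];
    split; [apply pmul_0l | intros n; apply add_0l; reflexivity].
  destruct (@pmul_monomial_lead f m) as [t [p [Hpm [Hpf Hp0]]]]; [lia|].
  set (k := m - dg) in *.
  destruct (padd_sub_ex p f) as [f' [Hf' Hf'0]].
  destruct (IH f') as [q' [r' [p' [Hq' [Hr' [Hpm' Hpa']]]]]].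
  { intros n Hn. apply Hf'0. destruct (Nat.eq_dec n m) as [->|]; [exact Hpf|].
    rewrite Hp0, Hf by lia. reflexivity. }
  destruct (padd_assoc_ex Hpa' Hf') as [s [Hs Hsf]].
  exists (fun j => if Nat.eqb j k then t else q' j), r', s.
  assert (Hq'k : q' k = zero) by (apply Hq'; lia).
  repeat split; [| exact Hr' | | exact Hsf].
  - intros n Hn. destruct (Nat.eqb_spec n k); [lia | apply Hq'; lia].
  - refine (pmul_add_disjoint _ _ Hpm' Hpm Hs).
    + intros j. unfold monomial. destruct (Nat.eqb_spec j k) as [->|]; [left; exact Hq'k | right; reflexivity].
    + intros j. unfold monomial. destruct (Nat.eqb_spec j k) as [->|].
      * rewrite Hq'k. apply add_0l; reflexivity.
      * apply add_zero; reflexivity.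
Qed.

End Division.

Theorem theorem3p5 (K : superring) (HK : superfield K) (f g : nat -> K) :
  is_poly f -> is_poly g -> (exists n, g n <> zero) ->
  exists q r : nat -> K, is_poly q /\ is_poly r /\
    (exists p : nat -> K, is_poly p /\ pmul q g p /\ padd p r f) /\
    ((forall n, r n = zero) \/
     exists dr dg, is_degree r dr /\ is_degree g dg /\ dr < dg).
Proof.
  intros [Nf Hf] [Ng Hg] [n0 Hn0].
  destruct (is_degree_ex Hg) as [Hz|[dg [_ Hdg]]]; [now exfalso; apply Hn0, Hz|].
  destruct (proj2 HK _ (proj1 Hdg)) as [c Hc].
  destruct (pdiv_bounded Hdg Hc Hf) as [q [r [p [Hq [Hr [Hpm Hpa]]]]]].
  exists q, r. split; [exists Nf; intros n Hn; apply Hq; lia|].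
  split; [exists dg; exact Hr|]. split.
  - exists p. repeat split; auto. exists (Nf + dg). intros n Hn.
    specialize (Hpa n). rewrite Hr, Hf in Hpa by lia. apply add_zero, Hpa.
  - destruct (is_degree_ex Hr) as [Hz|[dr [Hlt Hdr]]]; [left; exact Hz|].
    right. exists dr, dg. auto.
Qed.
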